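(* Assume (A1) and let $i,j\in I_N$. For every $(y,x)\in J_j^*\times J_i^*$ there exists a unique $\tau=T(y,x)\in(0,1)$ such that $\mathcal{D}_{\mathrm{implicit}}^{ji}(y,x)=\mathcal{E}_1(\tau,y)+\mathcal{E}_2(\tau,x)$. Moreover, $\mathcal{D}_{\mathrm{implicit}}^{ji}$ is differentiable there with $$\partial_{x_i}\mathcal{D}_{\mathrm{implicit}}^{ji}(y,x)=L_i'\Big(\frac{x_i}{1-T(y,x)}\Big),\qquad \partial_{y_j}\mathcal{D}_{\mathrm{implicit}}^{ji}(y,x)=-L_j'\Big(-\frac{y_j}{T(y,x)}\Big).$$
   Context: Junction: fix an integer $N\ge1$ and $N$ distinct unit vectors $e_1,\dots,e_N\in\mathbb{R}^2$. Set $J_i=[0,\infty)e_i$, $J_i^*=J_i\setminus\{0\}$, $J=\bigcup_iJ_i$, $I_N=\{1,\dots,N\}$. Each $x\in J_i$ is written $x=x_ie_i$, $x_i\ge0$. For a function $f$ on $J\times J$ (variables $(y,x)$), $f^{ji}$ denotes its restriction to $J_j\times J_i$, viewed as a function of $(y_j,x_i)$. (A1): there is $\gamma>0$ with $L_i\in C^2(\mathbb{R})$, $L_i''\ge\gamma$ for each $i$. $L_0(0)=\min_jL_j(0)$. For $\tau\in[0,1]$: $\mathcal{E}_1(\tau,y)=\tau L_j(-y_j/\tau)-\tau L_0(0)$ if $y=y_je_j\ne0$, $\tau\ne0$; $\mathcal{E}_1(\tau,0)=0$; $\mathcal{E}_1(0,y)=+\infty$ if $y\ne0$. $\mathcal{E}_2(\tau,x)=(1-\tau)L_i(x_i/(1-\tau))+\tau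 L_0(0)$ if $x=x_ie_i\ne0$, $\tau\ne1$; $\mathcal{E}_2(\tau,0)=L_0(0)$; $\mathcal{E}_2(1,x)=+\infty$ if $x\ne0$. $\mathcal{D}_{\mathrm{implicit}}(y,x)=\inf_{0\le\tau\le1}\{\mathcal{E}_1(\tau,y)+\mathcal{E}_2(\tau,x)\}$. *)

From Stdlib Require Import Reals Lra ClassicalEpsilon.
Open Scope R_scope.

(* Extended values: None stands for +infinity. *)
Definition ER := option R.
Definition ERadd (a b : ER) : ER :=
  match a, b with Some u, Some v => Some (u + v) | _, _ => None end.

Definition is_glb (E : R -> Prop) (m : R) : Prop :=
  (forall v, E v -> m <= v) /\ (forall b, (forall v, E v -> b <= v) -> b <= m).
Definition Rinf (E : R -> Prop) : R := epsilon (inhabits 0) (is_glb E).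

(* L0(0) = min_{1<=j<=N} L_j(0)  (the branches are indexed by 1..N). *)
Fixpoint Lmin0 (L : nat -> R -> R) (n : nat) : R :=
  match n with
  | O => 0
  | S O => L 1%nat 0
  | S m => Rmin (Lmin0 L m) (L n 0)
  end.

(* E1(tau, y) for y = yj e_j (yj >= 0), in the coordinate yj. *)
Definition Ecost1 (L : nat -> R -> R) (N j : nat) (tau yj : R) : ER :=
  if Req_dec_T yj 0 then Some 0
  else if Req_dec_T tau 0 then None
  else Some (tau * L j (- yj / tau) - tau * Lmin0 L N).

(* E2(tau, x) for x = xi e_i (xi >= 0), in the coordinate xi. *)
Definition Ecost2 (L : nat -> R -> R) (N i : nat) (tau xi : R) : ER :=
  if Req_dec_T xi 0 then Some (Lmin0 L N)
  else if Req_dec_T tau 1 then None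
  else Some ((1 - tau) * L i (xi / (1 - tau)) + tau * Lmin0 L N).

(* D_implicit^{ji}(yj, xi) = inf_{0<=tau<=1} (E1 + E2); the infimum is taken
   over the finite values (the value +infinity never lowers an infimum). *)
Definition Dimp (L : nat -> R -> R) (N j i : nat) (yj xi : R) : R :=
  Rinf (fun v => exists tau, 0 <= tau <= 1 /\
                 ERadd (Ecost1 L N j tau yj) (Ecost2 L N i tau xi) = Some v).

Definition differentiable2_at (f : R -> R -> R) (y x a b : R) : Prop :=
  forall eps, 0 < eps -> exists delta, 0 < delta /\
    forall h k, sqrt (h * h + k * k) < delta ->
      Rabs (f (y + h) (x + k) - f y x - a * h - b * k)
        <= eps * sqrt (h * h + k * k).

From Stdlib Require Import Reals Lra Psatz ClassicalEpsilon.
Open Scope R_scope.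

(* Proof of Theorem 19: for y, x > 0 the implicit cost
     D(y, x) = inf_{0<t<1} F(y, x, t),
     F(y, x, t) = t L_j(-y/t) + (1-t) L_i(x/(1-t))
   (the L_0(0) terms of E1 and E2 cancel) has a unique optimal weight T, and D
   is differentiable at (y, x) with the announced gradient.

   Both summands of F are perspectives s f(w/s) of a uniformly convex f
   (f'' >= gamma > 0), and the basic fact is a uniform convexity inequality
   for perspectives: the perspective dominates its tangent plane in (w, s) up
   to a quadratic term s' gamma/2 (w'/s' - w/s)^2.  From it:
   - F(y, x, .) blows up at t = 0 and t = 1, hence has a minimizer T in (0,1),
     which is a critical point of t |-> F(y, x, t);
   - at a critical point the tangent plane in (y, x) minorizes F(y', x', t)
     for every t, and the quadratic term forces uniqueness of T;
   - so D is squeezed between that plane and the smooth function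
     F(., ., T), which touch at (y, x): D is differentiable there. *)

Lemma derivable_pt_lim_congr (f g : R -> R) (x l l' : R) :
  (forall z, f z = g z) -> l = l' -> derivable_pt_lim f x l -> derivable_pt_lim g x l'.
Proof. intros Efg <-. apply derivable_pt_lim_ext, Efg. Qed.

Lemma derivable_pt_lim_remainder (f : R -> R) (u l : R) : derivable_pt_lim f u l ->
  forall eps, 0 < eps -> exists delta, 0 < delta /\
    forall d, Rabs d < delta -> Rabs (f (u + d) - f u - l * d) <= eps * Rabs d.
Proof.
  intros Hf eps Heps. destruct (Hf eps Heps) as [[delta Hdelta] Hd].
  exists delta. split; [exact Hdelta|]. intros d Hdd.
  destruct (Req_dec d 0) as [->|Hne].
  - rewrite Rplus_0_r, Rabs_R0, Rmult_0_r, Rminus_diag, Rminus_0_l, Ropp_0, Rabs_R0.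
    lra.
  - replace (f (u + d) - f u - l * d) with (((f (u + d) - f u) / d - l) * d)
      by (field; exact Hne).
    rewrite Rabs_mult. apply Rmult_le_compat_r; [apply Rabs_pos|].
    apply Rlt_le, (Hd d Hne Hdd).
Qed.

Lemma Rabs_le_norm2 (h k : R) : Rabs h <= sqrt (h * h + k * k).
Proof.
  rewrite <- sqrt_Rsqr_abs. apply sqrt_le_1_alt. unfold Rsqr. nra.
Qed.

Lemma differentiable2_separable (p q : R -> R) (y x a b : R) :
  derivable_pt_lim p y a -> derivable_pt_lim q x b ->
  differentiable2_at (fun y x => p y + q x) y x a b.
Proof.
  intros Hp Hq eps Heps.
  destruct (derivable_pt_lim_remainder p y a Hp (eps / 2) ltac:(lra)) as [d1 [Hd1 Rp]].
  destruct (derivable_pt_lim_remainder q x b Hq (eps / 2) ltac:(lra)) as [d2 [Hd2 Rq]].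
  exists (Rmin d1 d2). split; [apply Rmin_glb_lt; lra|]. intros h k Hn.
  pose proof (Rabs_le_norm2 h k) as Nh.
  pose proof (Rabs_le_norm2 k h) as Nk. rewrite (Rplus_comm (k * k)) in Nk.
  pose proof (Rmin_l d1 d2). pose proof (Rmin_r d1 d2).
  specialize (Rp h ltac:(lra)). specialize (Rq k ltac:(lra)).
  replace (p (y + h) + q (x + k) - (p y + q x) - a * h - b * k)
    with ((p (y + h) - p y - a * h) + (q (x + k) - q x - b * k)) by ring.
  eapply Rle_trans; [apply Rabs_triang|]. nra.
Qed.

Lemma differentiable2_squeeze (D U : R -> R -> R) (y x a b r : R) :
  0 < r -> D y x = U y x ->
  (forall h k, sqrt (h * h + k * k) < r ->
     D y x + a * h + b * k <= D (y + h) (x + k) <= U (y + h) (x + k)) ->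
  differentiable2_at U y x a b -> differentiable2_at D y x a b.
Proof.
  intros Hr Heq Hsq HU eps Heps.
  destruct (HU eps Heps) as [delta [Hdelta Hd]].
  exists (Rmin delta r). split; [apply Rmin_glb_lt; lra|]. intros h k Hn.
  pose proof (Rmin_l delta r). pose proof (Rmin_r delta r).
  specialize (Hsq h k ltac:(lra)). specialize (Hd h k ltac:(lra)).
  pose proof (Rle_abs (U (y + h) (x + k) - U y x - a * h - b * k)).
  pose proof (sqrt_pos (h * h + k * k)).
  assert (0 <= eps * sqrt (h * h + k * k)) by (apply Rmult_le_pos; lra).
  apply Rabs_le. lra.
Qed.

Lemma div_ge_of_le_div (c A t : R) : 0 < A -> 0 < t -> t <= c / A -> A <= c / t.
Proof.
  intros HA Ht Hle.
  assert (t * A <= c) by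
    (replace c with (c / A * A) by (field; lra); apply Rmult_le_compat_r; lra).
  apply (Rmult_le_reg_l t); [exact Ht|].
  replace (t * (c / t)) with c by (field; lra). lra.
Qed.

(* The perspective s f(w/s) of f, and the intercept at 0 of the tangent to f at
   z, which is the derivative of the perspective with respect to s. *)
Definition persp (f : R -> R) (w s : R) : R := s * f (w / s).
Definition intercept (f df : R -> R) (z : R) : R := f z - z * df z.

Section UniformlyConvex.
Variables (f df d2f : R -> R) (g : R).
Hypothesis f_deriv : forall z, derivable_pt_lim f z (df z).
Hypothesis df_deriv : forall z, derivable_pt_lim df z (d2f z).
Hypothesis d2f_ge : forall z, g <= d2f z.

Lemma df_increment (a b : R) : a <= b -> g * (b - a) <= df b - df a.
Proof.
  intros Hab. destruct (Req_dec a b) as [<-|Hne]; [lra|].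
  destruct (MVT_cor2 (fun w => df w - g * w) (fun w => d2f w - g) a b)
    as [c [Hc _]]; [lra| |].
  - intros c _. eapply (derivable_pt_lim_congr (df - mult_real_fct g id)%F);
      [reflexivity | | apply derivable_pt_lim_minus;
        [apply df_deriv | apply derivable_pt_lim_scal, derivable_pt_lim_id]].
    ring.
  - specialize (d2f_ge c). nra.
Qed.

Lemma uniform_convexity (u w : R) :
  f u + df u * (w - u) + g / 2 * ((w - u) * (w - u)) <= f w.
Proof.
  set (phi := fun z => f z - f u - df u * (z - u) - g / 2 * ((z - u) * (z - u))).
  assert (phi_deriv : forall c, derivable_pt_lim phi c (df c - df u - g * (c - u))).
  { intro c.
    eapply (derivable_pt_lim_congr
      (f - fct_cte (f u) - mult_real_fct (df u) (id - fct_cte u)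
         - mult_real_fct (g / 2) ((id - fct_cte u) * (id - fct_cte u)))%F);
      [reflexivity | | repeat first [ apply derivable_pt_lim_minus
        | apply derivable_pt_lim_scal | apply derivable_pt_lim_mult
        | apply derivable_pt_lim_id | apply derivable_pt_lim_const | apply f_deriv ]].
    unfold minus_fct, id, fct_cte. field. }
  assert (phi u = 0) by (unfold phi; ring).
  assert (0 <= phi w).
  { destruct (Rtotal_order u w) as [Hlt|[<-|Hlt]]; [| lra |].
    - destruct (MVT_cor2 phi _ u w Hlt (fun c _ => phi_deriv c)) as [c [E Hc]].
      pose proof (df_increment u c ltac:(lra)). nra.
    - destruct (MVT_cor2 phi _ w u Hlt (fun c _ => phi_deriv c)) as [c [E Hc]].
      pose proof (df_increment c u ltac:(lra)). nra. }
  unfold phi in *. lra.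
Qed.

Lemma persp_uniform_convexity (w s w' s' : R) : 0 < s -> 0 < s' ->
  persp f w s + df (w / s) * (w' - w) + intercept f df (w / s) * (s' - s)
    + s' * (g / 2 * ((w' / s' - w / s) * (w' / s' - w / s))) <= persp f w' s'.
Proof.
  intros Hs Hs'. unfold persp, intercept.
  set (z := w / s). set (z' := w' / s').
  assert (Ew : w = s * z) by (unfold z; field; lra).
  assert (Ew' : w' = s' * z') by (unfold z'; field; lra).
  pose proof (uniform_convexity z z') as Hconv.
  rewrite Ew, Ew'. nra.
Qed.

Lemma persp_coercive (w s : R) : 0 < s <= 1 ->
  - Rabs (f 0) - Rabs (df 0) * Rabs w + g / 2 * (w * w) / s <= persp f w s.
Proof.
  intros Hs. pose proof (persp_uniform_convexity 0 s w s ltac:(lra) ltac:(lra)) as H.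
  unfold persp in *. replace (0 / s) with 0 in H by (field; lra).
  replace (s * (g / 2 * ((w / s - 0) * (w / s - 0)))) with (g / 2 * (w * w) / s) in H
    by (field; lra).
  pose proof (Rle_abs (f 0)). pose proof (Rle_abs (- f 0)).
  pose proof (Rle_abs (- (df 0 * w))).
  rewrite Rabs_Ropp, Rabs_mult in *. nra.
Qed.

Lemma persp_deriv_state (w s : R) : s <> 0 ->
  derivable_pt_lim (fun w => persp f w s) w (df (w / s)).
Proof.
  intros Hs. unfold persp.
  eapply (derivable_pt_lim_congr (mult_real_fct s (comp f (fun w => w / s))));
    [reflexivity | | apply derivable_pt_lim_scal, derivable_pt_lim_comp;
       [apply derivable_pt_lim_div_scal, derivable_pt_lim_id | apply f_deriv]].
  field. exact Hs.
Qed.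

Lemma persp_deriv_weight (w a b t : R) : a * t + b <> 0 ->
  derivable_pt_lim (fun t => persp f w (a * t + b)) t
    (a * intercept f df (w / (a * t + b))).
Proof.
  intros Hne. unfold persp, intercept.
  assert (Haff : derivable_pt_lim (fun t => a * t + b) t a).
  { eapply (derivable_pt_lim_congr (mult_real_fct a id + fct_cte b)%F);
      [reflexivity | | apply derivable_pt_lim_plus;
        [apply derivable_pt_lim_scal, derivable_pt_lim_id | apply derivable_pt_lim_const]].
    ring. }
  eapply (derivable_pt_lim_congr
            (mult_fct (fun t => a * t + b) (comp f (fun t => w / (a * t + b)))));
    [reflexivity | | apply derivable_pt_lim_mult;
      [exact Haff | apply derivable_pt_lim_comp;
        [apply (derivable_pt_lim_div (fct_cte w));
           [apply derivable_pt_lim_const | exact Haff | exact Hne]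
        | apply f_deriv]]].
  unfold comp, fct_cte, Rsqr. field. exact Hne.
Qed.

End UniformlyConvex.

(* The finite part of E1(t, y e_j) + E2(t, x e_i) for y, x > 0 and 0 < t < 1,
   and its derivative in t. *)
Definition cost (Lj Li : R -> R) (y x t : R) : R := persp Lj (- y) t + persp Li x (1 - t).

Definition cost_slope (Lj dLj Li dLi : R -> R) (y x t : R) : R :=
  intercept Lj dLj (- y / t) - intercept Li dLi (x / (1 - t)).

Section TwoBranches.
Variables (Lj dLj d2Lj Li dLi d2Li : R -> R) (g : R).
Hypothesis Lj_deriv : forall z, derivable_pt_lim Lj z (dLj z).
Hypothesis dLj_deriv : forall z, derivable_pt_lim dLj z (d2Lj z).
Hypothesis d2Lj_ge : forall z, g <= d2Lj z.
Hypothesis Li_deriv : forall z, derivable_pt_lim Li z (dLi z).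
Hypothesis dLi_deriv : forall z, derivable_pt_lim dLi z (d2Li z).
Hypothesis d2Li_ge : forall z, g <= d2Li z.
Hypothesis g_pos : 0 < g.

Lemma cost_deriv (y x t : R) : 0 < t < 1 ->
  derivable_pt_lim (cost Lj Li y x) t (cost_slope Lj dLj Li dLi y x t).
Proof.
  intros Ht.
  pose proof (persp_deriv_weight Lj dLj Lj_deriv (- y) 1 0 t ltac:(lra)) as Dj.
  pose proof (persp_deriv_weight Li dLi Li_deriv x (-1) 1 t ltac:(lra)) as Di.
  eapply derivable_pt_lim_congr; [| | apply (derivable_pt_lim_plus _ _ _ _ _ Dj Di)].
  - intro s. unfold plus_fct, cost. do 2 f_equal; ring.
  - unfold cost_slope. replace (1 * t + 0) with t by ring.
    replace (-1 * t + 1) with (1 - t) by ring. ring.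
Qed.

Lemma cost_lower_bound (y x t y' x' t' : R) : 0 < t < 1 -> 0 < t' < 1 ->
  cost Lj Li y x t - dLj (- y / t) * (y' - y) + dLi (x / (1 - t)) * (x' - x)
    + cost_slope Lj dLj Li dLi y x t * (t' - t)
    + t' * (g / 2 * ((- y' / t' - - y / t) * (- y' / t' - - y / t)))
  <= cost Lj Li y' x' t'.
Proof.
  intros Ht Ht'.
  pose proof (persp_uniform_convexity Lj dLj d2Lj g Lj_deriv dLj_deriv d2Lj_ge
                (- y) t (- y') t' ltac:(lra) ltac:(lra)) as Pj.
  pose proof (persp_uniform_convexity Li dLi d2Li g Li_deriv dLi_deriv d2Li_ge
                x (1 - t) x' (1 - t') ltac:(lra) ltac:(lra)) as Pi.
  assert (0 <= (1 - t') * (g / 2 * ((x' / (1 - t') - x / (1 - t))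
                                      * (x' / (1 - t') - x / (1 - t))))).
  { apply Rmult_le_pos; [lra|]. apply Rmult_le_pos; [lra | apply Rle_0_sqr]. }
  unfold cost, cost_slope. lra.
Qed.

Lemma cost_coercive (y x M : R) : 0 < y -> 0 < x ->
  exists a, 0 < a <= 1 / 4 /\
    forall t, 0 < t <= a \/ 1 - a <= t < 1 -> M < cost Lj Li y x t.
Proof.
  intros Hy Hx.
  set (K := Rabs (Lj 0) + Rabs (dLj 0) * y + Rabs (Li 0) + Rabs (dLi 0) * x).
  set (A := Rabs M + K + 1).
  set (cy := g / 2 * (y * y)). set (cx := g / 2 * (x * x)).
  assert (HK : 0 <= K).
  { unfold K. pose proof (Rabs_pos (Lj 0)). pose proof (Rabs_pos (dLj 0)).
    pose proof (Rabs_pos (Li 0)). pose proof (Rabs_pos (dLi 0)). nra. }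
  assert (HA : M + K < A) by (unfold A; pose proof (Rle_abs M); lra).
  assert (HA0 : 0 < A) by (unfold A; pose proof (Rabs_pos M); lra).
  assert (Hcy : 0 < cy) by (apply Rmult_lt_0_compat; nra).
  assert (Hcx : 0 < cx) by (apply Rmult_lt_0_compat; nra).
  assert (0 < cy / A) by (apply Rdiv_lt_0_compat; lra).
  assert (0 < cx / A) by (apply Rdiv_lt_0_compat; lra).
  exists (Rmin (1 / 4) (Rmin (cy / A) (cx / A))).
  pose proof (Rmin_l (1 / 4) (Rmin (cy / A) (cx / A))).
  pose proof (Rmin_r (1 / 4) (Rmin (cy / A) (cx / A))).
  pose proof (Rmin_l (cy / A) (cx / A)). pose proof (Rmin_r (cy / A) (cx / A)).
  split; [split; [repeat apply Rmin_glb_lt; lra | lra] |].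
  intros t Ht.
  pose proof (persp_coercive Lj dLj d2Lj g Lj_deriv dLj_deriv d2Lj_ge (- y) t
                ltac:(lra)) as Cj.
  pose proof (persp_coercive Li dLi d2Li g Li_deriv dLi_deriv d2Li_ge x (1 - t)
                ltac:(lra)) as Ci.
  rewrite Rabs_Ropp, (Rabs_pos_eq y) in Cj by lra. rewrite (Rabs_pos_eq x) in Ci by lra.
  replace (- y * - y) with (y * y) in Cj by ring. fold cy in Cj. fold cx in Ci.
  assert (0 < cy / t) by (apply Rdiv_lt_0_compat; lra).
  assert (0 < cx / (1 - t)) by (apply Rdiv_lt_0_compat; lra).
  unfold cost; unfold K in HA. destruct Ht as [Ht|Ht].
  - pose proof (div_ge_of_le_div cy A t HA0 ltac:(lra) ltac:(lra)). lra.
  - pose proof (div_ge_of_le_div cx A (1 - t) HA0 ltac:(lra) ltac:(lra)). lra.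
Qed.

Lemma cost_minimizer (y x : R) : 0 < y -> 0 < x ->
  exists T, 0 < T < 1 /\
    (forall t, 0 < t < 1 -> cost Lj Li y x T <= cost Lj Li y x t) /\
    cost_slope Lj dLj Li dLi y x T = 0.
Proof.
  intros Hy Hx.
  destruct (cost_coercive y x (cost Lj Li y x (1 / 2)) Hy Hx) as [a [Ha Hout]].
  destruct (continuity_ab_min (cost Lj Li y x) a (1 - a)) as [T [HTmin HT]];
    [lra | |].
  { intros c Hc. apply derivable_continuous_pt.
    exists (cost_slope Lj dLj Li dLi y x c). apply cost_deriv. lra. }
  assert (Hmin : forall t, 0 < t < 1 -> cost Lj Li y x T <= cost Lj Li y x t).
  { intros t Ht. pose proof (HTmin (1 / 2) ltac:(lra)).
    destruct (Rle_or_lt t a); [pose proof (Hout t ltac:(lra)); lra|].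
    destruct (Rle_or_lt (1 - a) t); [pose proof (Hout t ltac:(lra)); lra|].
    apply HTmin. lra. }
  exists T. split; [lra | split; [exact Hmin |]].
  apply (deriv_minimum _ 0 1 T (exist _ _ (cost_deriv y x T ltac:(lra))));
    [lra | lra |].
  intros t Ht0 Ht1. apply Hmin. lra.
Qed.

Lemma cost_minimizer_unique (y x T T' : R) : 0 < y -> 0 < T < 1 -> 0 < T' < 1 ->
  cost_slope Lj dLj Li dLi y x T = 0 ->
  cost Lj Li y x T' <= cost Lj Li y x T -> T' = T.
Proof.
  intros Hy HT HT' Hslope Hle.
  pose proof (cost_lower_bound y x T y x T' HT HT') as Hlow.
  rewrite Hslope, !Rminus_diag, !Rmult_0_r, Rmult_0_l in Hlow.
  set (d := - y / T' - - y / T) in Hlow.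
  assert (Hd : d = 0).
  { apply Rsqr_0_uniq, Rle_antisym; [| apply Rle_0_sqr].
    apply (Rmult_le_reg_l (T' * (g / 2))); [apply Rmult_lt_0_compat; lra|].
    unfold Rsqr. lra. }
  unfold d in Hd.
  assert (E : y / T' = y / T) by (unfold Rdiv in *; lra).
  replace T' with (y / (y / T')) by (field; lra).
  rewrite E. field. lra.
Qed.

Lemma cost_tangent_plane (y x T y' x' t : R) : 0 < T < 1 -> 0 < t < 1 ->
  cost_slope Lj dLj Li dLi y x T = 0 ->
  cost Lj Li y x T - dLj (- y / T) * (y' - y) + dLi (x / (1 - T)) * (x' - x)
  <= cost Lj Li y' x' t.
Proof.
  intros HT Ht Hslope.
  pose proof (cost_lower_bound y x T y' x' t HT Ht) as Hlow. rewrite Hslope in Hlow.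
  assert (0 <= t * (g / 2 * ((- y' / t - - y / T) * (- y' / t - - y / T)))).
  { apply Rmult_le_pos; [lra|]. apply Rmult_le_pos; [lra | apply Rle_0_sqr]. }
  lra.
Qed.

Lemma cost_fixed_weight_differentiable (y x T : R) : 0 < T < 1 ->
  differentiable2_at (fun y x => cost Lj Li y x T) y x
    (- dLj (- y / T)) (dLi (x / (1 - T))).
Proof.
  intros HT. apply differentiable2_separable.
  - eapply derivable_pt_lim_congr with (f := comp (fun w => persp Lj w T) Ropp);
      [reflexivity | | apply derivable_pt_lim_comp;
        [apply derivable_pt_lim_opp, derivable_pt_lim_id
        | apply persp_deriv_state; [exact Lj_deriv | lra]]].
    ring.
  - apply persp_deriv_state; [exact Li_deriv | lra].
Qed.

End TwoBranches.

Lemma Rinf_is_glb (E : R -> Prop) (v0 lb : R) :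
  E v0 -> (forall v, E v -> lb <= v) -> is_glb E (Rinf E).
Proof.
  intros Hv0 Hlb. unfold Rinf. apply epsilon_spec.
  destruct (completeness (fun z => E (- z))) as [m [Hub Hleast]].
  - exists (- lb). intros z Hz. specialize (Hlb _ Hz). lra.
  - exists (- v0). rewrite Ropp_involutive. exact Hv0.
  - exists (- m). split.
    + intros v Hv. assert (- v <= m) by (apply Hub; rewrite Ropp_involutive; exact Hv). lra.
    + intros b Hb. assert (m <= - b).
      { apply Hleast. intros z Hz. specialize (Hb _ Hz). lra. }
      lra.
Qed.

Lemma Ecost_sum (L : nat -> R -> R) (N j i : nat) (y x t : R) :
  0 < y -> 0 < x -> 0 < t < 1 ->
  ERadd (Ecost1 L N j t y) (Ecost2 L N i t x) = Some (cost (L j) (L i) y x t).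
Proof.
  intros Hy Hx Ht. unfold Ecost1, Ecost2, cost, persp.
  destruct (Req_dec_T y 0); [lra|]. destruct (Req_dec_T t 0); [lra|].
  destruct (Req_dec_T x 0); [lra|]. destruct (Req_dec_T t 1); [lra|].
  simpl. f_equal. unfold Rdiv. ring.
Qed.

(* For y, x > 0 the values entering the infimum defining D are exactly the
   costs at weights in (0,1): the endpoints t = 0, 1 give +infinity. *)
Lemma Dimp_candidates (L : nat -> R -> R) (N j i : nat) (y x v : R) :
  0 < y -> 0 < x ->
  (exists tau, 0 <= tau <= 1 /\ ERadd (Ecost1 L N j tau y) (Ecost2 L N i tau x) = Some v)
  <-> exists t, 0 < t < 1 /\ v = cost (L j) (L i) y x t.
Proof.
  intros Hy Hx. split.
  - intros [tau [Htau E]]. unfold Ecost1, Ecost2 in E.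
    destruct (Req_dec_T y 0); [lra|]. destruct (Req_dec_T tau 0); [discriminate|].
    destruct (Req_dec_T x 0); [lra|]. destruct (Req_dec_T tau 1); [discriminate|].
    exists tau. split; [lra|]. injection E as <-. unfold cost, persp, Rdiv. ring.
  - intros [t [Ht ->]]. exists t. split; [lra|]. apply Ecost_sum; assumption.
Qed.

Lemma Dimp_bounds (L : nat -> R -> R) (N j i : nat) (y x lb : R) :
  0 < y -> 0 < x -> (forall t, 0 < t < 1 -> lb <= cost (L j) (L i) y x t) ->
  lb <= Dimp L N j i y x /\
  forall t, 0 < t < 1 -> Dimp L N j i y x <= cost (L j) (L i) y x t.
Proof.
  intros Hy Hx Hlb.
  assert (Hglb : is_glb (fun v => exists tau, 0 <= tau <= 1 /\
            ERadd (Ecost1 L N j tau y) (Ecost2 L N i tau x) = Some v) (Dimp L N j i y x)).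
  { apply (Rinf_is_glb _ (cost (L j) (L i) y x (1 / 2)) lb).
    - apply Dimp_candidates; [assumption | assumption | exists (1 / 2); split; [lra | reflexivity]].
    - intros v Hv. apply Dimp_candidates in Hv as [t [Ht ->]]; auto. }
  destruct Hglb as [Hlow Hgreatest]. split.
  - apply Hgreatest. intros v Hv. apply Dimp_candidates in Hv as [t [Ht ->]]; auto.
  - intros t Ht. apply Hlow, Dimp_candidates; [assumption | assumption | exists t; auto].
Qed.

Section ImplicitCostAtMinimizer.
Variables (L dL d2L : nat -> R -> R) (g : R) (N j i : nat).
Hypothesis Lj_deriv : forall z, derivable_pt_lim (L j) z (dL j z).
Hypothesis dLj_deriv : forall z, derivable_pt_lim (dL j) z (d2L j z).
Hypothesis d2Lj_ge : forall z, g <= d2L j z.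
Hypothesis Li_deriv : forall z, derivable_pt_lim (L i) z (dL i z).
Hypothesis dLi_deriv : forall z, derivable_pt_lim (dL i) z (d2L i z).
Hypothesis d2Li_ge : forall z, g <= d2L i z.
Hypothesis g_pos : 0 < g.
Variables (y x T : R).
Hypotheses (y_pos : 0 < y) (x_pos : 0 < x) (T_in : 0 < T < 1).
Hypothesis T_min : forall t, 0 < t < 1 -> cost (L j) (L i) y x T <= cost (L j) (L i) y x t.
Hypothesis T_crit : cost_slope (L j) (dL j) (L i) (dL i) y x T = 0.

Lemma Dimp_at_minimizer : Dimp L N j i y x = cost (L j) (L i) y x T.
Proof.
  destruct (Dimp_bounds L N j i y x (cost (L j) (L i) y x T) y_pos x_pos T_min)
    as [Hlo Hup].
  specialize (Hup T T_in). lra.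
Qed.

Lemma Dimp_sandwich (h k : R) : sqrt (h * h + k * k) < Rmin y x ->
  Dimp L N j i y x + - dL j (- y / T) * h + dL i (x / (1 - T)) * k
    <= Dimp L N j i (y + h) (x + k)
  /\ Dimp L N j i (y + h) (x + k) <= cost (L j) (L i) (y + h) (x + k) T.
Proof.
  intros Hn.
  pose proof (Rabs_le_norm2 h k). pose proof (Rabs_le_norm2 k h) as Nk.
  rewrite (Rplus_comm (k * k)) in Nk.
  pose proof (Rmin_l y x). pose proof (Rmin_r y x).
  pose proof (Rle_abs (- h)). pose proof (Rle_abs (- k)). rewrite Rabs_Ropp in *.
  destruct (Dimp_bounds L N j i (y + h) (x + k)
              (cost (L j) (L i) y x T - dL j (- y / T) * (y + h - y)
               + dL i (x / (1 - T)) * (x + k - x)) ltac:(lra) ltac:(lra))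
    as [Hlo Hup].
  { intros t Ht. apply (cost_tangent_plane _ _ _ _ _ _ g Lj_deriv dLj_deriv d2Lj_ge
                          Li_deriv dLi_deriv d2Li_ge g_pos); assumption. }
  rewrite Dimp_at_minimizer. split; [| exact (Hup T T_in)].
  replace (y + h - y) with h in Hlo by ring. replace (x + k - x) with k in Hlo by ring.
  lra.
Qed.

End ImplicitCostAtMinimizer.

Theorem mainTheorem19 :
  forall (N : nat) (L dL d2L : nat -> R -> R) (gamma : R),
    (1 <= N)%nat ->
    0 < gamma ->
    (forall k, (1 <= k <= N)%nat -> forall z,
        derivable_pt_lim (L k) z (dL k z) /\
        derivable_pt_lim (dL k) z (d2L k z) /\
        continuity_pt (d2L k) z /\
        gamma <= d2L k z) ->
    forall i j : nat, (1 <= i <= N)%nat -> (1 <= j <= N)%nat ->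
    forall yj xi : R, 0 < yj -> 0 < xi ->
    exists T : R,
      (0 < T < 1 /\
       ERadd (Ecost1 L N j T yj) (Ecost2 L N i T xi) = Some (Dimp L N j i yj xi) /\
       (forall T', 0 < T' < 1 ->
          ERadd (Ecost1 L N j T' yj) (Ecost2 L N i T' xi) = Some (Dimp L N j i yj xi) ->
          T' = T)) /\
      differentiable2_at (Dimp L N j i) yj xi
        (- dL j (- yj / T)) (dL i (xi / (1 - T))).
Proof.
  intros N L dL d2L g _ Hg HL i j Hi Hj y x Hy Hx.
  assert (Branch : forall k, (1 <= k <= N)%nat ->
    (forall z, derivable_pt_lim (L k) z (dL k z)) /\
    (forall z, derivable_pt_lim (dL k) z (d2L k z)) /\ (forall z, g <= d2L k z)).
  { intros k Hk. repeat split; intro z; apply (HL k Hk z). }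
  destruct (Branch j Hj) as (Lj_d & dLj_d & d2Lj_ge).
  destruct (Branch i Hi) as (Li_d & dLi_d & d2Li_ge).
  destruct (cost_minimizer _ _ _ _ _ _ g Lj_d dLj_d d2Lj_ge Li_d dLi_d d2Li_ge Hg y x Hy Hx)
    as [T [HT [Hmin Hcrit]]].
  pose proof (Dimp_at_minimizer L N j i y x T Hy Hx HT Hmin) as DT.
  exists T. split; [split; [exact HT | split] |].
  - rewrite DT. apply Ecost_sum; assumption.
  - intros T' HT' E. rewrite Ecost_sum, DT in E by assumption. injection E as E.
    apply (cost_minimizer_unique _ _ _ _ _ _ g Lj_d dLj_d d2Lj_ge Li_d dLi_d d2Li_ge Hg
             y x T T'); [assumption.. | lra].
  - apply (differentiable2_squeeze _ (fun y x => cost (L j) (L i) y x T) _ _ _ _ (Rmin y x)).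
    + apply Rmin_glb_lt; assumption.
    + exact DT.
    + exact (Dimp_sandwich L dL d2L g N j i Lj_d dLj_d d2Lj_ge Li_d dLi_d d2Li_ge Hg
               y x T Hy Hx HT Hmin Hcrit).
    + exact (cost_fixed_weight_differentiable _ _ _ _ Lj_d Li_d y x T HT).
Qed.
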